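(* Let $Y$ be a topological space and $L=\mathcal{O}(Y)$ its Heyting algebra of open sets. Let $\mathfrak{X}=(X,(R_j)_{j\in J})$ be a relational structure of type $\tau$. Then there is an isomorphism of algebras of type $\tau$ (which is moreover a Heyting algebra isomorphism of the underlying lattices) $\Phi:L^{\mathfrak{X}}\to\hat{\mathfrak{X}}^+$ from the convolution algebra of $\mathfrak{X}$ over $L$ to the complex algebra of the constant relational étalé $\hat{\mathfrak{X}}$, where $\Phi(\alpha)$ is the subobject $A$ of $\hat{X}$ (an open subset of $X\times Y$) with cross sections $(\{x\}\times Y)\cap A=\{x\}\times\alpha(x)$ for each $x\in X$.
   Context: A type is a function $\tau:J\to\mathbb{N}$, $j\mapsto n_j$. A relational structure $\mathfrak{X}=(X,(R_j)_J)$ of type $\tau$ is a set $X$ with an $(n_j+1)$-ary relation $R_j\subseteq X^{n_j+1}$ for each $j$. For a complete lattice $L$, the convolution algebra $L^{\mathfrak{X}}=(L^X,(f_j)_J)$ has underlying set all functions $X\to L$ and operations $f_j(\alpha_1,\ldots,\alpha_{n_j})(x)=\bigvee\{\alpha_1(x_1)\wedge\cdots\wedge\alpha_{n_j}(x_{n_j})\mid (x_1,\ldots,x_{n_j},x)\in R_j\}$. An étalé space over $Y$ is a pair $(E,\pi)$ with $\pi:E\to Y$ a local homeomorphism; morphisms are continuous maps commuting with the projections; subobjects of $(E,\pi)$ (equivalence classes of monomorphisms into it) correspond to open subsets of $E$, and $\mathrm{Sub}(E,\pi)$ denotes the set of subobjects. Products of étalé spaces are fibered products over $Y$. The constant étalé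 $\hat{X}$ is $X\times Y$ ($X$ discrete) with projection onto $Y$; $\hat{X}^{k}$ is identified with $X^k\times Y$, and for $R\subseteq X^{k}$, $\hat{R}=R\times Y$ is a subobject of $\hat{X}^k$. The constant relational étalé of $\mathfrak{X}$ is $\hat{\mathfrak{X}}=(\hat{X},(\hat{R}_j)_J)$. For a relational étalé $\mathcal{E}=(E,\pi,(R_j)_J)$ (an étalé space with a subobject $R_j$ of $(E,\pi)^{n_j+1}$ for each $j$), its complex algebra is $\mathcal{E}^+=(\mathrm{Sub}(E,\pi),(g_j)_J)$ with $g_j(A_1,\ldots,A_{n_j})=\pi_{n_j+1}((A_1\times\cdots\times A_{n_j}\times E)\cap R_j)$, the étalé relational image (product taken as étalé product, $\pi_{n_j+1}$ the last projection). For the constant case: $(x,y)\in\hat{R}_j(A_1,\ldots,A_{n_j})$ iff there exist $x_1,\ldots,x_{n_j}$ with $(x_1,\ldots,x_{n_j},x)\in R_j$ and $(x_i,y)\in A_i$ for all $i$. *)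

From HB Require Import structures.
From mathcomp Require Import all_boot all_order all_algebra.
From mathcomp Require Import all_classical all_reals all_analysis.
Set Implicit Arguments. Unset Strict Implicit. Unset Printing Implicit Defensive.
Local Open Scope classical_set_scope.

(* The Heyting algebra O(T) of open sets of a topological space T:
   meet = intersection, join = union, bottom = set0, top = setT,
   implication a -> b = the largest open U with U /\ a <= b. *)
Definition himp {T : topologicalType} (a b : set T) : set T :=
  \bigcup_(U in [set U : set T | open U /\ U `&` a `<=` b]) U.

(* A relational structure of type tau : J -> nat on a set X:
   R j xs x  means  (xs 0, ..., xs (tau j - 1), x) \in R_j. *)
Definition relstr (J : Type) (tau : J -> nat) (X : Type) :=
  forall j : J, ('I_(tau j) -> X) -> X -> Prop.

(* Operation f_j of the convolution algebra L^X with L = O(Y):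
   f_j(a_1..a_n)(x) = \/ { a_1(x_1) /\ ... /\ a_n(x_n) | (x_1..x_n,x) \in R_j }
   (arbitrary joins in O(Y) are unions, finite meets are intersections). *)
Definition conv_op (J : Type) (tau : J -> nat) (X : Type) (Y : topologicalType)
    (R : relstr tau X) (j : J) (alphas : 'I_(tau j) -> X -> set Y) : X -> set Y :=
  fun x => \bigcup_(xs in [set xs | R j xs x]) \bigcap_(i in [set: 'I_(tau j)]) alphas i (xs i).

(* The constant etale space hat X = X x Y, X discrete, projection onto Y. *)
Definition hatX (X : choiceType) (Y : topologicalType) : topologicalType :=
  (discrete_topology X * Y)%type.

Definition cplx_op (J : Type) (tau : J -> nat) (X : choiceType) (Y : topologicalType)
    (R : relstr tau X) (j : J) (As : 'I_(tau j) -> set (hatX X Y)) : set (hatX X Y) :=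
  [set p | exists xs : 'I_(tau j) -> X,
             R j xs p.1 /\ forall i, As i (xs i, p.2)].

From HB Require Import structures.
From mathcomp Require Import all_boot all_order all_algebra.
From mathcomp Require Import all_classical all_reals all_analysis.
Set Implicit Arguments. Unset Strict Implicit. Unset Printing Implicit Defensive.
Local Open Scope classical_set_scope.

(* Since X is discrete, a subset of X x Y is open iff each of its slices
   {y | (x, y) in A} is open in Y, so Sub(hat X) is the product of copies of
   O(Y) indexed by X, i.e. L^X.  Meets, joins and relational images are visibly
   computed slice by slice.  So is the Heyting implication: an open U with
   U /\ A <= B can be shrunk to the open boxes {x} x U_x, and each box only
   sees the slices of A and B over x. *)

Section Slices.
Variables (X : choiceType) (Y : topologicalType).

Definition slice (A : set (hatX X Y)) (x : X) : set Y := [set y | A (x, y)].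

Definition of_slices (alpha : X -> set Y) : set (hatX X Y) :=
  [set p | alpha p.1 p.2].

Lemma of_slicesK : cancel of_slices slice.
Proof. by []. Qed.

Lemma sliceK : cancel slice of_slices.
Proof. by move=> A; apply/funext => -[]. Qed.

Lemma of_slices_inj : injective of_slices.
Proof. exact: can_inj of_slicesK. Qed.

Lemma open_slice (A : set (hatX X Y)) (x : X) : open A -> open (slice A x).
Proof.
rewrite !openE => oA y /oA [[P Q] /= [Px Qy] PQA].
apply: filterS Qy => z Qz; apply: PQA; split => //=.
exact: nbhs_singleton Px.
Qed.

Lemma open_of_slices (alpha : X -> set Y) :
  (forall x, open (alpha x)) -> open (of_slices alpha).
Proof.
move=> oalpha; rewrite openE => -[x y] /= alpha_xy.
exists ([set x], alpha x) => /=.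
  split; first exact: (@discrete_set1 (discrete_topology X)).
  exact: open_nbhs_nbhs.
by move=> [a b] [/= -> ?].
Qed.

Lemma open_setX1 (x : X) (U : set Y) :
  open U -> open ([set x] `*` U : set (hatX X Y)).
Proof.
move=> oU; rewrite -[_ `*` _]sliceK; apply: open_of_slices => x'.
have [->|nx] := eqVneq x' x.
  by rewrite (_ : slice _ x = U) //; apply/seteqP; split => [z []|z].
rewrite (_ : slice _ x' = set0); first exact: open0.
by apply/seteqP; split => // z [/= /eqP]; rewrite (negPf nx).
Qed.

Lemma setI_fiber_of_slices (alpha : X -> set Y) (x : X) :
  [set p | p.1 = x] `&` of_slices alpha = [set p | p.1 = x /\ alpha x p.2].
Proof. by apply/seteqP; split => -[a b] [/= -> ?]. Qed.

Lemma of_slices_himp (alpha beta : X -> set Y) :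
  of_slices (fun x => himp (alpha x) (beta x))
  = himp (of_slices alpha) (of_slices beta).
Proof.
apply/seteqP; split => -[x y] /= [W [oW WAB] Wy].
- exists ([set x] `*` W); last by [].
  split; first exact: open_setX1.
  by move=> [a b] [[/= -> Wb] alpha_b]; apply: WAB.
- exists (slice W x); last by [].
  split; first exact: open_slice.
  by move=> z [Wz alpha_z]; apply: (WAB (x, z)).
Qed.

Lemma of_slices_conv_op (J : Type) (tau : J -> nat) (R : relstr tau X) (j : J)
    (alphas : 'I_(tau j) -> X -> set Y) :
  of_slices (conv_op R alphas) = cplx_op R (fun i => of_slices (alphas i)).
Proof.
apply/seteqP; split => -[x y] /=.
- by case=> xs /= Rxs alphas_xs; exists xs; split => // i; apply: alphas_xs.
- by case=> xs [Rxs alphas_xs]; exists xs => // i _; apply: alphas_xs.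
Qed.

End Slices.

Theorem theorem3 (J : Type) (tau : J -> nat) (X : choiceType) (Y : topologicalType)
    (R : relstr tau X) :
  exists Phi : (X -> set Y) -> set (hatX X Y),
    (* Phi maps L^X into Sub(hat X) = open subsets of X x Y *)
    (forall alpha : X -> set Y, (forall x, open (alpha x)) -> open (Phi alpha)) /\
    (* cross sections: ({x} x Y) /\ Phi(alpha) = {x} x alpha(x) *)
    (forall alpha : X -> set Y, (forall x, open (alpha x)) ->
       forall x : X, [set p | p.1 = x] `&` Phi alpha = [set p | p.1 = x /\ alpha x p.2]) /\
    (* bijectivity onto Sub(hat X) *)
    (forall alpha beta : X -> set Y, (forall x, open (alpha x)) -> (forall x, open (beta x)) ->
       Phi alpha = Phi beta -> alpha = beta) /\
    (forall A : set (hatX X Y), open A ->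
       exists alpha : X -> set Y, (forall x, open (alpha x)) /\ Phi alpha = A) /\
    (* homomorphism of algebras of type tau *)
    (forall (j : J) (alphas : 'I_(tau j) -> X -> set Y),
       (forall i x, open (alphas i x)) ->
       Phi (conv_op R alphas) = cplx_op R (fun i => Phi (alphas i))) /\
    (* Heyting algebra homomorphism (operations of L^X are pointwise) *)
    Phi (fun _ => set0) = set0 /\
    Phi (fun _ => setT) = setT /\
    (forall alpha beta : X -> set Y, (forall x, open (alpha x)) -> (forall x, open (beta x)) ->
       Phi (fun x => alpha x `&` beta x) = Phi alpha `&` Phi beta /\
       Phi (fun x => alpha x `|` beta x) = Phi alpha `|` Phi beta /\
       Phi (fun x => himp (alpha x) (beta x)) = himp (Phi alpha) (Phi beta)).
Proof.
exists (@of_slices X Y).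
split; first exact: open_of_slices.
split; first by move=> alpha _ x; apply: setI_fiber_of_slices.
split; first by move=> alpha beta _ _; apply: of_slices_inj.
split.
  move=> A oA; exists (slice A); split; last exact: sliceK.
  by move=> x; apply: open_slice.
split; first by move=> j alphas _; apply: of_slices_conv_op.
do 2 split => //.
by move=> alpha beta _ _; do 2 split => //; apply: of_slices_himp.
Qed.
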